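(* Let $\mathbf B$ be a basic algebra over an algebraically closed field $\mathbbm k$ given by a quiver $\Gamma$ with relations, and let $i\ne j$ be vertices of $\Gamma$ such that no arrow of $\Gamma$ ends at $i$ and no arrow of $\Gamma$ starts at $j$. Let $\mathbf A$ be obtained from $\mathbf B$ by gluing the components corresponding to $i$ and $j$. Then there is an equivalence of categories $\mathbf B\text{-}\mathrm{mod}/\langle\bar{\mathbf B}_i,\bar{\mathbf B}_j\rangle\simeq\mathbf A\text{-}\mathrm{mod}/\langle\bar{\mathbf A}_{ij}\rangle$.
   Context: All algebras are finite-dimensional over $\mathbbm k$, and $\mathbf C\text{-}\mathrm{mod}$ is the category of finitely generated left $\mathbf C$-modules. For a basic algebra $\mathbf B$ with $\mathbf B/\operatorname{rad}\mathbf B=\prod_{k=1}^m\bar{\mathbf B}_k$, $\bar{\mathbf B}_k\cong\mathbbm k$ (the $\bar{\mathbf B}_k$ corresponding to the vertices of the quiver of $\mathbf B$ and also regarded as the simple $\mathbf B$-modules), gluing the components $\bar{\mathbf B}_i$ and $\bar{\mathbf B}_j$ produces the algebra $\mathbf A$ which is the preimage in $\mathbf B$ of the subalgebra $\{(\lambda_1,\dots,\lambda_m):\lambda_i=\lambda_j\}$ of $\mathbf B/\operatorname{rad}\mathbf B$. Its quiver is obtained by identifying $i$ and $j$ into one vertex $(ij)$, and $\bar{\mathbf A}_{ij}$ denotes the simple $\mathbf A$-module corresponding to $(ij)$. For a category $\mathcal C$ and a set $\mathfrak M$ of objects, $\mathcal C/\langle\mathfrak M\rangle$ denotes the quotient of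 $\mathcal C$ by the ideal of morphisms factoring through finite direct sums of objects from $\mathfrak M$. *)

From HB Require Import structures.
From mathcomp Require Import all_boot all_order all_algebra all_field.
Set Implicit Arguments. Unset Strict Implicit. Unset Printing Implicit Defensive.
Import GRing.Theory.
Local Open Scope ring_scope.

(* Finite-dimensional algebras are [falgType F]; modules are finite-dimensional
   left modules, represented (up to isomorphism) as matrix representations
   acting on column vectors: [a . v = ract M a *m v]. *)

Section Radical.
Variables (F : fieldType) (B : falgType F).

Definition left_ideal (L : {vspace B}) : Prop :=
  forall a x : B, x \in L -> a * x \in L.

Definition maximal_left_ideal (L : {vspace B}) : Prop :=
  [/\ left_ideal L, L != fullv &
      forall L' : {vspace B}, left_ideal L' -> (L <= L')%VS -> L' != fullv -> L' = L].

Definition in_rad (x : B) : Prop :=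
  forall L, maximal_left_ideal L -> x \in L.

Definition in_rad2 (x : B) : Prop :=
  exists s : seq (B * B),
    (forall p, p \in s -> in_rad p.1 /\ in_rad p.2) /\
    x = \sum_(p <- s) p.1 * p.2.
End Radical.

Section Basic.
Variables (F : fieldType) (B : falgType F) (m : nat) (pi : 'I_m -> B -> F).

(* [pi] identifies B / rad B with the product of m copies of F:
   pi k is the k-th component B -> B/rad B = prod_k F -> F, i.e. the action
   of B on the simple module \bar B_k. *)
Definition top_chars : Prop :=
  [/\ (forall k (c : F) (x y : B), pi k (c *: x + y) = c * pi k x + pi k y),
      (forall k (x y : B), pi k (x * y) = pi k x * pi k y),
      (forall k, pi k 1 = 1),
      (forall x, (forall k, pi k x = 0) <-> in_rad x) &
      (forall lam : 'I_m -> F, exists x : B, forall k, pi k x = lam k)].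

(* Arrows a -> b of the quiver correspond to a basis of e_b (rad/rad^2) e_a,
   i.e. of the classes x of rad B mod rad^2 B with y x = pi_b(y) x and
   x y = pi_a(y) x modulo rad^2 B. *)
Definition arrow_elt (a b : 'I_m) (x : B) : Prop :=
  in_rad x /\
  forall y : B, in_rad2 (y * x - pi b y *: x) /\ in_rad2 (x * y - pi a y *: x).

Definition no_arrow_ends_at (i : 'I_m) : Prop :=
  forall a x, arrow_elt a i x -> in_rad2 x.

Definition no_arrow_starts_at (j : 'I_m) : Prop :=
  forall b x, arrow_elt j b x -> in_rad2 x.

(* The glued algebra A: preimage of {lambda_i = lambda_j} in B. *)
Definition glued (i j : 'I_m) (x : B) : Prop := pi i x = pi j x.
End Basic.

(* Finite-dimensional left modules over the subalgebra S of B. *)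
Record rep (F : fieldType) (B : falgType F) (S : B -> Prop) : Type := Rep {
  rdim : nat;
  ract : B -> 'M[F]_rdim;
  ract_lin : forall (c : F) (x y : B), S x -> S y ->
               ract (c *: x + y) = c *: ract x + ract y;
  ract_mul : forall x y : B, S x -> S y -> ract (x * y) = ract x *m ract y;
  ract1 : ract 1 = 1%:M
}.

Section Cat.
Variables (F : fieldType) (B : falgType F) (m : nat) (pi : 'I_m -> B -> F).
Variables (S : B -> Prop) (T : 'I_m -> Prop).

Definition is_hom (M N : rep S) (f : 'M[F]_(rdim N, rdim M)) : Prop :=
  forall x, S x -> f *m ract M x = ract N x *m f.

(* X is a finite direct sum of the simple modules \bar B_k, k in T. *)
Definition simple_sum (X : rep S) : Prop :=
  exists c : 'I_(rdim X) -> 'I_m,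
    (forall k, T (c k)) /\
    forall x, S x -> ract X x = diag_mx (\row_k pi (c k) x).

Definition in_ideal (M N : rep S) (f : 'M[F]_(rdim N, rdim M)) : Prop :=
  exists X : rep S, simple_sum X /\
    exists (g : 'M[F]_(rdim X, rdim M)) (h : 'M[F]_(rdim N, rdim X)),
      [/\ is_hom g, is_hom h & f = h *m g].

(* Equality of morphisms in the quotient category. *)
Definition qeq (M N : rep S) (f g : 'M[F]_(rdim N, rdim M)) : Prop :=
  [/\ is_hom f, is_hom g & in_ideal (f - g)].
End Cat.

(* Equivalence of the quotient categories (S1-mod / <T1>) and (S2-mod / <T2>):
   a functor on the quotient which is full, faithful and essentially
   surjective. *)
Definition qcat_equiv (F : fieldType) (B : falgType F) (m : nat)
    (pi : 'I_m -> B -> F) (S1 : B -> Prop) (T1 : 'I_m -> Prop)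
    (S2 : B -> Prop) (T2 : 'I_m -> Prop) : Prop :=
  exists (Fo : rep S1 -> rep S2)
         (Fm : forall M N : rep S1,
                 'M[F]_(rdim N, rdim M) -> 'M[F]_(rdim (Fo N), rdim (Fo M))),
  (forall M N f, is_hom f -> is_hom (Fm M N f)) /\
  (forall M N f g, qeq pi T1 f g -> qeq pi T2 (Fm M N f) (Fm M N g)) /\
  (forall M, qeq pi T2 (Fm M M 1%:M) 1%:M) /\
  (forall M N P f g, @is_hom F B S1 M N f -> @is_hom F B S1 N P g ->
        qeq pi T2 (Fm M P (g *m f)) (Fm N P g *m Fm M N f)) /\
  (forall M N f g, is_hom f -> is_hom g ->
        qeq pi T2 (Fm M N f) (Fm M N g) -> qeq pi T1 f g) /\
  (forall M N h, is_hom h -> exists f, @is_hom F B S1 M N f /\ qeq pi T2 (Fm M N f) h) /\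
  (forall Y : rep S2, exists (X : rep S1)
          (u : 'M[F]_(rdim Y, rdim (Fo X))) (v : 'M[F]_(rdim (Fo X), rdim Y)),
        [/\ is_hom u, is_hom v, qeq pi T2 (v *m u) 1%:M & qeq pi T2 (u *m v) 1%:M]).

From HB Require Import structures.
From mathcomp Require Import all_boot all_order all_algebra all_field zify.
From Stdlib Require Import Classical.
Set Implicit Arguments. Unset Strict Implicit. Unset Printing Implicit Defensive.
Import GRing.Theory.
Local Open Scope ring_scope.

(* Since no arrow ends at i, a lift u of the idempotent e_i satisfies
   u (rad B) <= (rad B)^2; as rad B is nilpotent (Nakayama), a high power e of u
   satisfies e b = pi_i(b) e for all b.  Dually there is f with b f = pi_j(b) f,
   and f e = 0 can be arranged.  Then B = A + F e, with eps = e + f in A, and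
   restriction of scalars along A <= B is the equivalence:
   - a B-morphism p on which A acts through pi_i (as on any morphism factoring
     through copies of A_ij) splits as e p + f p, on which B acts through pi_i,
     resp. pi_j, so p factors through copies of B_i and B_j;
   - an A-morphism h differs from the B-morphism h - (e h f + f h e) by a
     morphism on which A acts through pi_i;
   - an A-module Y becomes a B-module by letting e act as (1 - Q) eps, where Q
     projects onto the span of the images of eps a - pi_i(a) eps, a in A. *)

Section Nakayama.
Variables (F : fieldType) (B : falgType F).

Definition maximal_left_subideal (M L : {vspace B}) : Prop :=
  [/\ left_ideal L, (L <= M)%VS, L != M &
      forall K, left_ideal K -> (L <= K)%VS -> (K <= M)%VS -> K != M -> K = L].

Lemma left_ideal0 : left_ideal (0%VS : {vspace B}).
Proof. by move=> a x; rewrite !memv0 => /eqP->; rewrite mulr0. Qed.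

Lemma exists_maximal_left_subideal (M L : {vspace B}) :
  left_ideal L -> (L <= M)%VS -> L != M ->
  exists L', (L <= L')%VS /\ maximal_left_subideal M L'.
Proof.
move: {2}(\dim M - \dim L)%N (leqnn (\dim M - \dim L)) => n.
elim: n L => [|n IH] L dML liL LM nLM.
  by move: nLM; rewrite eqEdim LM /=; have := dimvS LM; lia.
have [[K [liK LK KM nKM nKL]] | noK] := classic (exists K,
    [/\ left_ideal K, (L <= K)%VS, (K <= M)%VS, K != M & K != L]).
  have ltLK : (\dim L < \dim K)%N.
    rewrite ltn_neqAle dimvS // andbT; apply: contra nKL => /eqP dLK.
    by rewrite eq_sym eqEdim LK dLK /=.
  have dMK : (\dim M - \dim K <= n)%N by have := dimvS KM; lia.
  have [L' [KL' maxL']] := IH K dMK liK KM nKM.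
  by exists L'; split=> //; apply: subv_trans LK KL'.
exists L; split=> //; split=> // K liK LK KM nKM.
by apply/eqP/negPn/negP => nKL; apply: noK; exists K.
Qed.

Lemma maximal_left_ideal_preim (M L : {vspace B}) v :
  left_ideal M -> maximal_left_subideal M L -> v \in M -> v \notin L ->
  maximal_left_ideal (amulr v @^-1: L)%VS.
Proof.
move=> liM [liL LM _ maxL] vM vL.
have memP u : (u \in (amulr v @^-1: L)%VS) = (u * v \in L).
  by rewrite -memv_preim lfunE.
split.
- by move=> a u; rewrite !memP -mulrA; apply: liL.
- by apply: contraNneq vL => Pf; have := memvf (1 : B); rewrite -Pf memP mul1r.
move=> L' liL' PL' nL'f.
(* [L' * v + L] lies between [L] and [M], so by maximality it is one of them. *)
pose K := (L' * <[v]> + L)%VS.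
have liK : left_ideal K.
  move=> a w /memv_addP[u + [l lL ->]] => /memv_cosetP[x xL' ->].
  rewrite mulrDr mulrA; apply: memv_add; last exact: liL.
  by apply/memv_cosetP; exists (a * x); rewrite ?liL'.
have KM : (K <= M)%VS.
  rewrite subv_add LM andbT; apply/prodvP => x _ _ /vlineP[c ->].
  by rewrite -scalerAr memvZ // liM.
apply: subv_anti; rewrite PL' andbT.
have [KeM | nKM] := eqVneq K M.
  have := vM; rewrite -KeM => /memv_addP[u + [l lL vE]] => /memv_cosetP[x xL' uE].
  rewrite {}uE in vE.
  have : 1 - x \in L' by apply: (subvP PL'); rewrite memP mulrBl mul1r {1}vE addrAC subrr add0r.
  move=> /(memvD xL'); rewrite addrC subrK => L'1.
  case/negP: nL'f; apply/eqP/subv_anti; rewrite subvf /=.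
  by apply/subvP => y _; rewrite -(mulr1 y) liL'.
have KL := maxL K liK (addvSr _ _) KM nKM.
apply/subvP => u uL'; rewrite memP -KL -[u * v]addr0.
by apply: memv_add; [apply/memv_cosetP; exists u | exact: mem0v].
Qed.

Lemma in_rad_mul_subideal (M L : {vspace B}) x w :
  left_ideal M -> maximal_left_subideal M L -> in_rad x -> w \in M -> x * w \in L.
Proof.
move=> liM maxL radx wM; have [liL _ _ _] := maxL.
have [wL | wNL] := boolP (w \in L); first exact: liL.
by move/(_ _ (maximal_left_ideal_preim liM maxL wM wNL)): radx; rewrite -memv_preim lfunE.
Qed.

Lemma nakayama (J M : {vspace B}) : (forall x, x \in J -> in_rad x) ->
  left_ideal M -> (J * M)%VS = M -> M = 0%VS.
Proof.
move=> radJ liM JM; apply: NNPP => /eqP; rewrite eq_sym => n0M.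
have [L [_ maxL]] := exists_maximal_left_subideal left_ideal0 (sub0v M) n0M.
case: (maxL) => _ LM nLM _.
have ML : (M <= L)%VS.
  rewrite -JM; apply/prodvP => x w xJ wM.
  exact: (in_rad_mul_subideal liM maxL (radJ x xJ) wM).
by move: nLM; rewrite eqEsubv LM ML.
Qed.
End Nakayama.

Section TopCharacters.
Variables (F : fieldType) (B : falgType F) (m : nat) (pi : 'I_m -> B -> F).
Hypothesis hpi : top_chars pi.

Lemma piDZ k c x y : pi k (c *: x + y) = c * pi k x + pi k y.
Proof. by case: hpi. Qed.
Lemma piM k x y : pi k (x * y) = pi k x * pi k y.
Proof. by case: hpi. Qed.
Lemma pi1 k : pi k 1 = 1.
Proof. by case: hpi. Qed.
Lemma pi0 k : pi k 0 = 0.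
Proof. by have := piDZ k (-1) 0 0; rewrite scaleN1r addNr mulN1r addNr. Qed.
Lemma piD k x y : pi k (x + y) = pi k x + pi k y.
Proof. by have := piDZ k 1 x y; rewrite scale1r mul1r. Qed.
Lemma piZ k c x : pi k (c *: x) = c * pi k x.
Proof. by have := piDZ k c x 0; rewrite !addr0 pi0 addr0. Qed.
Lemma piB k x y : pi k (x - y) = pi k x - pi k y.
Proof. by rewrite piD -scaleN1r piZ mulN1r. Qed.
Lemma pi_sum k (I : Type) (r : seq I) (P : pred I) (G : I -> B) :
  pi k (\sum_(a <- r | P a) G a) = \sum_(a <- r | P a) pi k (G a).
Proof. exact: (big_morph (pi k) (piD k) (pi0 k)). Qed.
Lemma piX k x n : pi k (x ^+ n) = pi k x ^+ n.
Proof. by elim: n => [|n IH]; rewrite ?expr0 ?pi1 // !exprS piM IH. Qed.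

Definition top_vec (x : B) : 'rV[F]_m := \row_k pi k x.
Lemma top_vec_is_linear : linear top_vec.
Proof. by move=> c x y; apply/rowP => k; rewrite !mxE piDZ. Qed.
HB.instance Definition _ :=
  GRing.isLinear.Build F B 'rV[F]_m _ top_vec top_vec_is_linear.

Definition radv : {vspace B} := lker (linfun top_vec).

Lemma memv_radv x : x \in radv <-> forall k, pi k x = 0.
Proof.
rewrite memv_ker lfunE; split=> [/eqP/rowP h k | h]; first by have := h k; rewrite !mxE.
by apply/eqP/rowP => k; rewrite !mxE.
Qed.

Lemma in_rad_radv x : in_rad x <-> x \in radv.
Proof. by rewrite memv_radv; case: hpi => _ _ _ ->. Qed.

Lemma radv_mull a x : x \in radv -> a * x \in radv.
Proof. by rewrite !memv_radv => xJ k; rewrite piM xJ mulr0. Qed.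
Lemma radv_mulr a x : x \in radv -> x * a \in radv.
Proof. by rewrite !memv_radv => xJ k; rewrite piM xJ mul0r. Qed.

Lemma left_ideal_radv_prod (X : {vspace B}) : left_ideal (radv * X)%VS.
Proof.
move=> a x xJX; have : a * x \in (<[a]> * (radv * X))%VS by rewrite memv_mul ?memv_line.
rewrite prodvA; apply/subvP/prodvSl.
by apply/prodvP => _ z /vlineP[c ->] zJ; rewrite -scalerAl memvZ ?radv_mull.
Qed.

Lemma radv_pow_stable : exists k, (radv ^+ k.+2 = radv ^+ k.+1)%VS.
Proof.
apply: NNPP => unstable.
have decr k : (\dim (radv ^+ k.+1) + k <= \dim radv)%N.
  elim: k => [|k IH]; first by rewrite addn0.
  have sub : (radv ^+ k.+2 <= radv ^+ k.+1)%VS.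
    rewrite [X in (X <= _)%VS]expvSl; apply/prodvP => x y _ yJ.
    by rewrite expvSl in yJ *; apply: left_ideal_radv_prod.
  have : (\dim (radv ^+ k.+2) < \dim (radv ^+ k.+1))%N.
    rewrite ltn_neqAle dimvS // andbT; apply/negP => /eqP dimE.
    by apply: unstable; exists k; apply/eqP; rewrite eqEdim sub dimE /=.
  lia.
by have := decr (\dim radv).+1; lia.
Qed.

Lemma radv_nilpotent : exists N, (radv ^+ N = 0)%VS.
Proof.
have [k Jk] := radv_pow_stable; exists k.+1.
apply: (nakayama (J := radv)) => [x /in_rad_radv // | | ].
  by rewrite expvSl; apply: left_ideal_radv_prod.
by rewrite -expvSl.
Qed.

Lemma in_rad2_mul x y : x \in radv -> y \in radv -> in_rad2 (x * y).
Proof.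
move=> /in_rad_radv xJ /in_rad_radv yJ.
by exists [:: (x, y)]; split=> [p /[!inE] /eqP-> //|]; rewrite big_seq1.
Qed.

Lemma in_rad2_prodv x : in_rad2 x -> x \in (radv * radv)%VS.
Proof.
move=> [s [radp ->]]; rewrite big_seq; apply: memv_suml => p ps.
by have [/in_rad_radv p1 /in_rad_radv p2] := radp p ps; apply: memv_mul.
Qed.

Lemma exists_lift k : exists x : B, [forall l, pi l x == (l == k)%:R].
Proof.
have [x pix] : exists x : B, forall l, pi l x = (l == k)%:R by case: hpi.
by exists x; apply/forallP => l; rewrite pix.
Qed.

Definition lift k : B := xchoose (exists_lift k).

Lemma pi_lift k l : pi l (lift k) = (l == k)%:R.
Proof. by have /forallP/(_ l)/eqP := xchooseP (exists_lift k). Qed.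

Lemma lift_decomp b : b - \sum_k pi k b *: lift k \in radv.
Proof.
apply/memv_radv => l; rewrite piB pi_sum (bigD1 l) //= piZ pi_lift eqxx mulr1.
rewrite big1 ?addr0 ?subrr // => k /negbTE nkl.
by rewrite piZ pi_lift eq_sym nkl mulr0.
Qed.

Lemma sum_lift_sub1 : \sum_k lift k - 1 \in radv.
Proof.
rewrite -opprB rpredN; have := lift_decomp 1.
by under eq_bigr do rewrite pi1 scale1r.
Qed.

Lemma lift_mul_lift k l : k != l -> lift k * lift l \in radv.
Proof.
move=> nkl; apply/memv_radv => h; rewrite piM !pi_lift.
by have [->|] := eqVneq h k; rewrite ?(negbTE nkl) ?mulr0 ?mul0r.
Qed.

Lemma sub_pi_mul_lift y k : (y - pi k y *: 1) * lift k \in radv.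
Proof.
apply/memv_radv => h; rewrite piM piB piZ pi1 mulr1 pi_lift.
by have [->|] := eqVneq h k; rewrite ?subrr ?mul0r ?mulr0.
Qed.

Lemma lift_mul_sub_pi y k : lift k * (y - pi k y *: 1) \in radv.
Proof.
apply/memv_radv => h; rewrite piM piB piZ pi1 mulr1 pi_lift.
by have [->|] := eqVneq h k; rewrite ?subrr ?mul0r ?mulr0.
Qed.

Lemma arrow_elt_lift a b z : z \in radv -> arrow_elt pi a b (lift b * z * lift a).
Proof.
move=> zJ; split; first by apply/in_rad_radv/radv_mulr/radv_mull.
move=> y; split.
  have -> : y * (lift b * z * lift a) - pi b y *: (lift b * z * lift a)
          = (y - pi b y *: 1) * lift b * (z * lift a).
    by rewrite mulrBl -scalerAl mul1r mulrBl -scalerAl !mulrA.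
  by apply: in_rad2_mul; [exact: sub_pi_mul_lift | exact: radv_mulr].
have -> : lift b * z * lift a * y - pi a y *: (lift b * z * lift a)
        = lift b * z * (lift a * (y - pi a y *: 1)).
  by rewrite mulrBr -scalerAr mulr1 mulrBr -scalerAr !mulrA.
by apply: in_rad2_mul; [exact: radv_mull | exact: lift_mul_sub_pi].
Qed.

Lemma lift_mul_radv i : no_arrow_ends_at pi i ->
  forall z, z \in radv -> lift i * z \in (radv * radv)%VS.
Proof.
move=> noarr z zJ.
(* Modulo the radical [\sum_a lift a = 1], and [lift i * z * lift a] is an arrow element. *)
have -> : lift i * z = lift i * z * \sum_a lift a - lift i * z * (\sum_a lift a - 1).
  by rewrite mulrBr mulr1 opprB addrC subrK.
apply: memvB; last by rewrite memv_mul ?radv_mull ?sum_lift_sub1.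
rewrite mulr_sumr.
by apply: memv_suml => a _; apply/in_rad2_prodv/(noarr a)/arrow_elt_lift.
Qed.

Lemma radv_mul_lift j : no_arrow_starts_at pi j ->
  forall z, z \in radv -> z * lift j \in (radv * radv)%VS.
Proof.
move=> noarr z zJ.
have -> : z * lift j = (\sum_b lift b) * z * lift j - (\sum_b lift b - 1) * (z * lift j).
  by rewrite mulrBl mul1r opprB addrC mulrA subrK.
apply: memvB; last by rewrite memv_mul ?radv_mulr ?sum_lift_sub1.
rewrite !mulr_suml.
by apply: memv_suml => b _; apply/in_rad2_prodv/(noarr b)/arrow_elt_lift.
Qed.

Lemma mul_radv_pow u : (forall z, z \in radv -> u * z \in (radv * radv)%VS) ->
  forall k y, y \in radv -> u ^+ k * y \in (radv ^+ k.+1)%VS.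
Proof.
move=> uJ; have uJ2 : (<[u]> * radv <= radv * radv)%VS.
  by apply/prodvP => _ z /vlineP[c ->] zJ; rewrite -scalerAl memvZ ?uJ.
elim=> [|k IH] y yJ; first by rewrite expr0 mul1r.
rewrite exprS -mulrA.
have : u * (u ^+ k * y) \in (<[u]> * radv ^+ k.+1)%VS by rewrite memv_mul ?memv_line ?IH.
by apply/subvP; rewrite !expvSl !prodvA prodvSl.
Qed.

Lemma radv_mul_pow u : (forall z, z \in radv -> z * u \in (radv * radv)%VS) ->
  forall k y, y \in radv -> y * u ^+ k \in (radv ^+ k.+1)%VS.
Proof.
move=> uJ; have uJ2 : (radv * <[u]> <= radv * radv)%VS.
  by apply/prodvP => z _ zJ /vlineP[c ->]; rewrite -scalerAr memvZ ?uJ.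
elim=> [|k IH] y yJ; first by rewrite expr0 mulr1.
rewrite exprSr mulrA.
have : y * u ^+ k * u \in (radv ^+ k.+1 * <[u]>)%VS by rewrite memv_mul ?memv_line ?IH.
by apply/subvP; rewrite !expvSr -!prodvA prodvSr.
Qed.

Lemma left_scalar_of_kill k v : (forall z, z \in radv -> v * z = 0) ->
  (forall l, l != k -> v * lift l = 0) -> forall b, v * b = pi k b *: v.
Proof.
move=> vJ vl b; set w := b - pi k b *: 1.
have : v * w = 0.
  rewrite -(subrK (\sum_l pi l w *: lift l) w) mulrDr vJ ?lift_decomp // add0r.
  rewrite mulr_sumr big1 // => l _; rewrite -scalerAr.
  have [->|nlk] := eqVneq l k; last by rewrite vl ?scaler0.
  by rewrite /w piB piZ pi1 mulr1 subrr scale0r.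
by rewrite /w mulrBr -scalerAr mulr1 => /eqP; rewrite subr_eq0 => /eqP.
Qed.

Lemma right_scalar_of_kill k v : (forall z, z \in radv -> z * v = 0) ->
  (forall l, l != k -> lift l * v = 0) -> forall b, b * v = pi k b *: v.
Proof.
move=> vJ vl b; set w := b - pi k b *: 1.
have : w * v = 0.
  rewrite -(subrK (\sum_l pi l w *: lift l) w) mulrDl vJ ?lift_decomp // add0r.
  rewrite mulr_suml big1 // => l _; rewrite -scalerAl.
  have [->|nlk] := eqVneq l k; last by rewrite vl ?scaler0.
  by rewrite /w piB piZ pi1 mulr1 subrr scale0r.
by rewrite /w mulrBl -scalerAl mul1r => /eqP; rewrite subr_eq0 => /eqP.
Qed.

Lemma pi_pow_lift k N l : pi l (lift k ^+ N.+1) = (l == k)%:R.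
Proof. by rewrite piX pi_lift; case: (l == k); rewrite ?expr1n ?expr0n. Qed.

Lemma exists_left_scalar i : no_arrow_ends_at pi i ->
  exists e : B, (forall b, e * b = pi i b *: e) /\ (forall k, pi k e = (k == i)%:R).
Proof.
move=> noarr; have [N JN] := radv_nilpotent.
have kill z : z \in radv -> lift i ^+ N * z = 0.
  move=> zJ; apply/eqP; rewrite -memv0 -(prodv0 radv) -JN -expvSl.
  exact: mul_radv_pow (lift_mul_radv noarr) _ _ zJ.
exists (lift i ^+ N.+1); split; last exact: pi_pow_lift.
apply: left_scalar_of_kill => [z zJ | l nli]; rewrite exprSr -mulrA kill //.
  exact: radv_mull.
by rewrite lift_mul_lift // eq_sym.
Qed.

Lemma exists_right_scalar j : no_arrow_starts_at pi j ->
  exists f : B, (forall b, b * f = pi j b *: f) /\ (forall k, pi k f = (k == j)%:R).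
Proof.
move=> noarr; have [N JN] := radv_nilpotent.
have kill z : z \in radv -> z * lift j ^+ N = 0.
  move=> zJ; apply/eqP; rewrite -memv0 -(prodv0 radv) -JN -expvSl.
  exact: radv_mul_pow (radv_mul_lift noarr) _ _ zJ.
exists (lift j ^+ N.+1); split; last exact: pi_pow_lift.
apply: right_scalar_of_kill => [z zJ | l nlj]; rewrite exprS mulrA kill //.
  exact: radv_mulr.
exact: lift_mul_lift.
Qed.

Lemma exists_gluing_idempotents i j : i != j ->
  no_arrow_ends_at pi i -> no_arrow_starts_at pi j ->
  exists e f : B, [/\ forall b, e * b = pi i b *: e, forall k, pi k e = (k == i)%:R,
    forall b, b * f = pi j b *: f, forall k, pi k f = (k == j)%:R & f * e = 0].
Proof.
move=> nij noi noj.
have [e0 [e0_mul pi_e0]] := exists_left_scalar noi.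
have [f [mul_f pi_f]] := exists_right_scalar noj.
have ff : f * f = f by rewrite mul_f pi_f eqxx scale1r.
(* Subtracting [f * e0] keeps [e0 * B = F e0] and makes [f] kill it. *)
exists (e0 - f * e0), f; split=> //.
- by move=> b; rewrite mulrBl -mulrA e0_mul -scalerAr scalerBr.
- move=> k; rewrite piB piM pi_f pi_e0.
  by have [->|] := eqVneq k i; rewrite ?(negbTE nij) ?mul0r ?mulr0 subr0.
- by rewrite mulrBr mulrA ff subrr.
Qed.
End TopCharacters.

Section RepAction.
Variables (F : fieldType) (B : falgType F) (S : B -> Prop) (X : rep S).
Hypothesis S0 : S 0.

Lemma ract0 : ract X 0 = 0.
Proof. by have := ract_lin X (-1) S0 S0; rewrite !scaleN1r oppr0 addr0 addNr. Qed.
Lemma ractD x y : S x -> S y -> ract X (x + y) = ract X x + ract X y.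
Proof. by move=> Sx Sy; have := ract_lin X 1 Sx Sy; rewrite !scale1r. Qed.
Lemma ractZ c x : S x -> ract X (c *: x) = c *: ract X x.
Proof. by move=> Sx; have := ract_lin X c Sx S0; rewrite !addr0 ract0 addr0. Qed.
Lemma ractB x y : S x -> S y -> ract X (x - y) = ract X x - ract X y.
Proof.
by move=> Sx Sy; have := ract_lin X (-1) Sy Sx; rewrite !scaleN1r !(addrC (- _)).
Qed.
End RepAction.

Definition res (F : fieldType) (B : falgType F) (S : B -> Prop)
    (M : rep (fun _ : B => True)) : rep S :=
  @Rep F B S (rdim M) (ract M) (fun c x y _ _ => ract_lin M c I I)
       (fun x y _ _ => ract_mul M I I) (ract1 M).

Lemma res_is_hom (F : fieldType) (B : falgType F) (S : B -> Prop)
    (M N : rep (fun _ : B => True)) (g : 'M[F]_(rdim N, rdim M)) :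
  is_hom g -> @is_hom F B S (res S M) (res S N) g.
Proof. by move=> ghom x _; apply: ghom. Qed.

Section Morphisms.
Variables (F : fieldType) (B : falgType F) (S : B -> Prop).

Lemma is_hom1 (M : rep S) : is_hom (1%:M : 'M[F]_(rdim M)).
Proof. by move=> x _; rewrite mul1mx mulmx1. Qed.

Lemma is_hom_mul (M N P : rep S) (g : 'M[F]_(rdim N, rdim M)) (h : 'M[F]_(rdim P, rdim N)) :
  is_hom g -> is_hom h -> is_hom (h *m g).
Proof. by move=> ghom hhom x Sx; rewrite -mulmxA ghom // !mulmxA hhom. Qed.
End Morphisms.

Section SimpleSums.
Variables (F : fieldType) (B : falgType F) (m : nat) (pi : 'I_m -> B -> F).
Hypothesis hpi : top_chars pi.
Variable S : B -> Prop.

Definition simple_act n (c : 'I_n -> 'I_m) (x : B) : 'M[F]_n :=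
  diag_mx (\row_l pi (c l) x).

Lemma simple_act_lin n c (a : F) x y : S x -> S y ->
  simple_act c (a *: x + y) = a *: @simple_act n c x + simple_act c y.
Proof.
by move=> _ _; rewrite /simple_act -linearP; congr diag_mx; apply/rowP => l; rewrite !mxE piDZ.
Qed.

Lemma simple_act_mul n c x y : S x -> S y ->
  simple_act c (x * y) = @simple_act n c x *m simple_act c y.
Proof.
move=> _ _; rewrite /simple_act mul_diag_mx; apply/matrixP => p q.
by rewrite !mxE piM; case: (p == q); rewrite ?mulr1n ?mulr0n ?mulr0.
Qed.

Lemma simple_act1 n c : @simple_act n c 1 = 1%:M.
Proof. by rewrite /simple_act -diag_const_mx; congr diag_mx; apply/rowP => l; rewrite !mxE pi1. Qed.

Definition simple_rep n (c : 'I_n -> 'I_m) : rep S :=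
  @Rep F B S n (simple_act c) (@simple_act_lin n c) (@simple_act_mul n c) (simple_act1 c).

Lemma simple_act_const n c k x : (forall l, c l = k) -> @simple_act n c x = (pi k x)%:M.
Proof.
by move=> ck; rewrite /simple_act -diag_const_mx; congr diag_mx; apply/rowP => l; rewrite !mxE ck.
Qed.

Lemma in_ideal0 (T : 'I_m -> Prop) k : T k -> forall M N : rep S,
  in_ideal pi T (0 : 'M[F]_(rdim N, rdim M)).
Proof.
move=> Tk M N; exists (simple_rep (fun _ : 'I_0 => k)); split; first by exists (fun _ => k).
by exists 0, 0; split; rewrite ?mul0mx // => x _; rewrite mul0mx mulmx0.
Qed.

Lemma qeq_refl (T : 'I_m -> Prop) k (M N : rep S) (g : 'M[F]_(rdim N, rdim M)) :
  T k -> is_hom g -> qeq pi T g g.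
Proof. by move=> Tk ghom; split=> //; rewrite subrr; apply: in_ideal0 Tk M N. Qed.

Lemma in_idealD (T : 'I_m -> Prop) (M N : rep S) (u v : 'M[F]_(rdim N, rdim M)) :
  in_ideal pi T u -> in_ideal pi T v -> in_ideal pi T (u + v).
Proof.
move=> [X1 [[c1 [T1 X1E]] [g1 [h1 [g1hom h1hom ->]]]]].
move=> [X2 [[c2 [T2 X2E]] [g2 [h2 [g2hom h2hom ->]]]]].
pose c (l : 'I_(rdim X1 + rdim X2)) := match split l with inl a => c1 a | inr b => c2 b end.
have cE x : \row_l pi (c l) x = row_mx (\row_l pi (c1 l) x) (\row_l pi (c2 l) x).
  by apply/rowP => l; rewrite !mxE /c; case: (split l) => a; rewrite mxE.
exists (simple_rep c); split.
  by exists c; split=> // l; rewrite /c; case: (split l).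
exists (col_mx g1 g2), (row_mx h1 h2); split; last by rewrite mul_row_col.
- move=> x Sx; rewrite /= /simple_act cE diag_mx_row mul_col_mx mul_block_col.
  by rewrite !mul0mx addr0 add0r g1hom // g2hom // X1E // X2E.
- move=> x Sx; rewrite /= /simple_act cE diag_mx_row mul_mx_row mul_row_block.
  by rewrite !mulmx0 addr0 add0r -X1E // -X2E // h1hom // h2hom.
Qed.

Definition bi_scalar k (M N : rep S) (p : 'M[F]_(rdim N, rdim M)) : Prop :=
  forall a, S a -> p *m ract M a = pi k a *: p /\ ract N a *m p = pi k a *: p.

Lemma bi_scalarZ k (M N : rep S) c (p : 'M[F]_(rdim N, rdim M)) :
  bi_scalar k p -> bi_scalar k (c *: p).
Proof.
move=> pk a Sa; have [pr pl] := pk a Sa.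
by rewrite -scalemxAl pr -scalemxAr pl !scalerA mulrC.
Qed.

(* A rank factorization of [p] factors it through a sum of copies of [k]. *)
Lemma in_ideal_bi_scalar (T : 'I_m -> Prop) k (M N : rep S) (p : 'M[F]_(rdim N, rdim M)) :
  T k -> bi_scalar k p -> in_ideal pi T p.
Proof.
move=> Tk pk; exists (simple_rep (fun _ : 'I_(\rank p) => k)); split; first by exists (fun _ => k).
have [D DE] : exists D, row_base p = D *m p by apply/submxP; rewrite eq_row_base.
exists (row_base p), (p *m pinvmx (row_base p)); split.
- move=> x Sx; have [pr _] := pk x Sx.
  by rewrite /= (simple_act_const (k := k)) // mul_scalar_mx DE -mulmxA pr scalemxAr.
- move=> x Sx; have [_ pl] := pk x Sx.
  by rewrite /= (simple_act_const (k := k)) // mul_mx_scalar mulmxA pl scalemxAl.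
- by rewrite mulmxKpV // eq_row_base.
Qed.

Lemma in_ideal1_bi_scalar k (M N : rep S) (p : 'M[F]_(rdim N, rdim M)) :
  in_ideal pi (fun l => l = k) p -> bi_scalar k p.
Proof.
move=> [X [[c [ck XE]] [g [h [ghom hhom ->]]]]] a Sa.
have Xa : ract X a = (pi k a)%:M by rewrite XE // -/(simple_act c a) (simple_act_const _ ck).
split; first by rewrite -mulmxA ghom // Xa mul_scalar_mx scalemxAr.
by rewrite mulmxA -hhom // Xa mul_mx_scalar scalemxAl.
Qed.
End SimpleSums.

Section Gluing.
Variables (F : fieldType) (B : falgType F) (m : nat) (pi : 'I_m -> B -> F).
Hypothesis hpi : top_chars pi.
Variables (i j : 'I_m) (e f : B).
Hypothesis neq_ij : i != j.
Hypothesis e_mul : forall b, e * b = pi i b *: e.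
Hypothesis pi_e : forall k, pi k e = (k == i)%:R.
Hypothesis mul_f : forall b, b * f = pi j b *: f.
Hypothesis pi_f : forall k, pi k f = (k == j)%:R.
Hypothesis f_mul_e : f * e = 0.

Local Notation A := (glued pi i j).
Local Notation S1 := (fun _ : B => True).
Local Notation T1 := (fun k : 'I_m => k = i \/ k = j).
Local Notation T2 := (fun k : 'I_m => k = i).
Local Notation J := (radv pi).

Lemma pi_e_i : pi i e = 1. Proof. by rewrite pi_e eqxx. Qed.
Lemma pi_e_j : pi j e = 0. Proof. by rewrite pi_e eq_sym (negbTE neq_ij). Qed.
Lemma pi_f_j : pi j f = 1. Proof. by rewrite pi_f eqxx. Qed.
Lemma pi_f_i : pi i f = 0. Proof. by rewrite pi_f (negbTE neq_ij). Qed.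
Lemma e_mule : e * e = e. Proof. by rewrite e_mul pi_e_i scale1r. Qed.
Lemma e_mulf : e * f = 0. Proof. by rewrite e_mul pi_f_i scale0r. Qed.
Lemma f_mulf : f * f = f. Proof. by rewrite mul_f pi_f_j scale1r. Qed.

Lemma glued0 : A 0. Proof. by rewrite /glued !(pi0 hpi). Qed.
Lemma glued1 : A 1. Proof. by rewrite /glued !(pi1 hpi). Qed.
Lemma gluedD x y : A x -> A y -> A (x + y).
Proof. by rewrite /glued !(piD hpi) => -> ->. Qed.
Lemma gluedZ c x : A x -> A (c *: x).
Proof. by rewrite /glued !(piZ hpi) => ->. Qed.
Lemma gluedB x y : A x -> A y -> A (x - y).
Proof. by rewrite /glued !(piB hpi) => -> ->. Qed.
Lemma gluedM x y : A x -> A y -> A (x * y).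
Proof. by rewrite /glued !(piM hpi) => -> ->. Qed.
Lemma radv_glued x : x \in J -> A x.
Proof. by move/(memv_radv hpi) => x0; rewrite /glued !x0. Qed.

Lemma mul_e_sub a : a * e - pi i a *: e \in J.
Proof.
apply/(memv_radv hpi) => k; rewrite (piB hpi) (piZ hpi) (piM hpi) pi_e.
by have [->|] := eqVneq k i; rewrite ?mulr1 ?subrr ?mulr0 ?subr0.
Qed.

Lemma f_mul_sub a : f * a - pi j a *: f \in J.
Proof.
apply/(memv_radv hpi) => k; rewrite (piB hpi) (piZ hpi) (piM hpi) pi_f.
by have [->|] := eqVneq k j; rewrite ?mul1r ?mulr1 ?subrr ?mul0r ?mulr0 ?subr0.
Qed.

Lemma e_mul_radv x : x \in J -> e * x = 0.
Proof. by move/(memv_radv hpi) => x0; rewrite e_mul x0 scale0r. Qed.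
Lemma radv_mul_f x : x \in J -> x * f = 0.
Proof. by move/(memv_radv hpi) => x0; rewrite mul_f x0 scale0r. Qed.

Definition eps := e + f.

Lemma glued_eps : A eps.
Proof. by rewrite /glued /eps !(piD hpi) pi_e_i pi_e_j pi_f_i pi_f_j addr0 add0r. Qed.
Lemma glued_1_eps : A (1 - eps). Proof. exact: gluedB glued1 glued_eps. Qed.
Lemma pi_1_eps : pi i (1 - eps) = 0.
Proof. by rewrite (piB hpi) (pi1 hpi) (piD hpi) pi_e_i pi_f_i addr0 subrr. Qed.
Lemma e_mul_1_eps : e * (1 - eps) = 0.
Proof. by rewrite mulrBr mulr1 mulrDr e_mule e_mulf addr0 subrr. Qed.
Lemma mul_1_eps_e : (1 - eps) * e = 0.
Proof. by rewrite mulrBl mul1r mulrDl e_mule f_mul_e addr0 subrr. Qed.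

Definition e_coord b := pi i b - pi j b.
Definition glued_part b := b - e_coord b *: e.

Lemma glued_glued_part b : A (glued_part b).
Proof.
rewrite /glued /glued_part /e_coord !(piB hpi) !(piZ hpi) pi_e_i pi_e_j.
by rewrite mulr0 subr0 mulr1 opprB addrC subrK.
Qed.

Lemma glued_partE b : b = glued_part b + e_coord b *: e.
Proof. by rewrite subrK. Qed.

Lemma e_coord_glued a c : A a -> e_coord (a + c *: e) = c.
Proof.
move=> Aa; rewrite /e_coord !(piD hpi) !(piZ hpi) pi_e_i pi_e_j Aa.
by rewrite mulr1 mulr0 addr0 addrAC subrr add0r.
Qed.

Lemma glued_part_glued a c : A a -> glued_part (a + c *: e) = a.
Proof. by move=> Aa; rewrite /glued_part e_coord_glued // addrK. Qed.

Lemma glued_part_id a : A a -> glued_part a = a.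
Proof. by move=> Aa; rewrite /glued_part /e_coord Aa subrr scale0r subr0. Qed.

Lemma res_in_ideal (M N : rep S1) (u : 'M[F]_(rdim N, rdim M)) :
  in_ideal pi T1 u -> @in_ideal F B m pi A T2 (res A M) (res A N) u.
Proof.
move=> [X [[c [Tc XE]] [g [h [ghom hhom ->]]]]].
exists (res A X); split; last by exists g, h; split=> // x _; [exact: ghom | exact: hhom].
exists (fun _ => i); split=> // x Ax; rewrite /= XE //; congr diag_mx.
by apply/rowP => l; rewrite !mxE; case: (Tc l) => ->.
Qed.

Lemma ract_idem_decomp (X : rep S1) : ract X e + ract X f + ract X (1 - eps) = 1%:M.
Proof. by rewrite (ractB X) // (ract1 X) (ractD X) // addrC subrK. Qed.

Lemma ract_mul_e (X : rep S1) a :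
  ract X (a * e) = ract X (a * e - pi i a *: e) + pi i a *: ract X e.
Proof. by rewrite -(ractZ X) // -(ractD X) // subrK. Qed.

Lemma ract_f_mul (X : rep S1) a :
  ract X (f * a) = ract X (f * a - pi j a *: f) + pi j a *: ract X f.
Proof. by rewrite -(ractZ X) // -(ractD X) // subrK. Qed.

Section RestrictionFaithfulFull.
Variables M N : rep S1.
Local Notation RM := (ract M).
Local Notation RN := (ract N).

Lemma hom_of_glued_hom (g : 'M[F]_(rdim N, rdim M)) :
  (forall a, A a -> g *m RM a = RN a *m g) -> g *m RM e = RN e *m g -> is_hom g.
Proof.
move=> gA ge x _; rewrite (glued_partE x) (ractD M) // (ractZ M) // (ractD N) // (ractZ N) //.
by rewrite mulmxDr mulmxDl (gA _ (glued_glued_part x)) -scalemxAr ge scalemxAl.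
Qed.

Lemma res_faithful (u v : 'M[F]_(rdim N, rdim M)) : is_hom u -> is_hom v ->
  @qeq F B m pi A T2 (res A M) (res A N) u v -> qeq pi T1 u v.
Proof.
move=> uhom vhom [_ _ /in_ideal1_bi_scalar pA]; split=> //; set p := u - v.
have phom x : p *m RM x = RN x *m p by rewrite mulmxBl mulmxBr uhom // vhom.
have p_rad x : x \in J -> RN x *m p = 0.
  move=> xJ; have [_ ->] := pA x (radv_glued xJ).
  by have /(memv_radv hpi)-> := xJ; rewrite scale0r.
have -> : p = RN e *m p + RN f *m p.
  have p1 : RN (1 - eps) *m p = 0 by have [_ ->] := pA _ glued_1_eps; rewrite pi_1_eps scale0r.
  by rewrite -{1}(mul1mx p) -(ract_idem_decomp N) !mulmxDl p1 addr0.
apply: (in_idealD hpi);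
  [apply: (in_ideal_bi_scalar hpi (k := i)) | apply: (in_ideal_bi_scalar hpi (k := j))];
  (try by [left | right]) => b _; split.
- by rewrite -mulmxA phom mulmxA -(ract_mul N) // e_mul (ractZ N) // scalemxAl.
- rewrite mulmxA -(ract_mul N) // ract_mul_e mulmxDl p_rad ?mul_e_sub //.
  by rewrite add0r scalemxAl.
- rewrite -mulmxA phom mulmxA -(ract_mul N) // ract_f_mul mulmxDl p_rad ?f_mul_sub //.
  by rewrite add0r scalemxAl.
- by rewrite mulmxA -(ract_mul N) // mul_f (ractZ N) // scalemxAl.
Qed.

Section Full.
Variable h : 'M[F]_(rdim N, rdim M).
Hypothesis hA : forall a, A a -> h *m RM a = RN a *m h.

Definition cross_term : 'M[F]_(rdim N, rdim M) := RN e *m h *m RM f + RN f *m h *m RM e.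

Lemma cross_term_bi_scalar : @bi_scalar F B m pi A i (res A M) (res A N) cross_term.
Proof.
have e_h_rad x : x \in J -> RN e *m h *m RM x = 0.
  move=> xJ; rewrite -mulmxA (hA (radv_glued xJ)) mulmxA -(ract_mul N) //.
  by rewrite e_mul_radv // (ract0 N) // mul0mx.
have rad_h_f x : x \in J -> RN x *m h *m RM f = 0.
  move=> xJ; rewrite -(hA (radv_glued xJ)) -mulmxA -(ract_mul M) //.
  by rewrite radv_mul_f // (ract0 M) // mulmx0.
move=> a Aa; split.
  rewrite /= /cross_term mulmxDl -!mulmxA -!(ract_mul M) // ract_f_mul e_mul (ractZ M) //.
  rewrite !mulmxA mulmxDr (e_h_rad _ (f_mul_sub a)) add0r -!scalemxAr.
  by rewrite -Aa scalerDr.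
rewrite /= /cross_term mulmxDr !mulmxA -!(ract_mul N) // ract_mul_e mul_f (ractZ N) //.
rewrite !mulmxDl (rad_h_f _ (mul_e_sub a)) add0r -!scalemxAl.
by rewrite -Aa scalerDr.
Qed.

Lemma sub_cross_term_hom : is_hom (h - cross_term).
Proof.
(* [h] commutes with [1 - eps], which [e] kills on either side. *)
have h_e : h *m RM e - RN f *m h *m RM e = RN e *m h *m RM e.
  have z : RN (1 - eps) *m h *m RM e = 0.
    rewrite -(hA glued_1_eps) -mulmxA -(ract_mul M) //.
    by rewrite mul_1_eps_e (ract0 M) // mulmx0.
  by rewrite -{1}(mul1mx h) -(ract_idem_decomp N) !mulmxDl z addr0 addrK.
have e_h : RN e *m h - RN e *m h *m RM f = RN e *m h *m RM e.
  have z : RN e *m h *m RM (1 - eps) = 0.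
    rewrite -mulmxA (hA glued_1_eps) mulmxA -(ract_mul N) //.
    by rewrite e_mul_1_eps (ract0 N) // mul0mx.
  by rewrite -{1}(mulmx1 (RN e *m h)) -(ract_idem_decomp M) !mulmxDr z addr0 addrK.
apply: hom_of_glued_hom => [a Aa|].
  by rewrite mulmxBl mulmxBr hA //; have [-> ->] := cross_term_bi_scalar Aa.
have d_e : cross_term *m RM e = RN f *m h *m RM e.
  rewrite /cross_term mulmxDl -!mulmxA -!(ract_mul M) // f_mul_e e_mule.
  by rewrite (ract0 M) // !mulmx0 add0r.
have e_d : RN e *m cross_term = RN e *m h *m RM f.
  rewrite /cross_term mulmxDr !mulmxA -!(ract_mul N) // e_mule e_mulf.
  by rewrite (ract0 N) // !mul0mx addr0.
by rewrite mulmxBl mulmxBr d_e e_d h_e e_h.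
Qed.
End Full.

Lemma res_full (h : 'M[F]_(rdim N, rdim M)) : @is_hom F B A (res A M) (res A N) h ->
  exists g, @is_hom F B S1 M N g /\ @qeq F B m pi A T2 (res A M) (res A N) g h.
Proof.
move=> hhom; have ghom := sub_cross_term_hom hhom.
exists (h - cross_term h); split=> //; split; [exact: res_is_hom | exact: hhom |].
rewrite addrAC subrr add0r -scaleN1r.
by apply: (in_ideal_bi_scalar hpi (k := i)) => //; apply/bi_scalarZ/cross_term_bi_scalar.
Qed.
End RestrictionFaithfulFull.

Lemma eps_mul_eps : eps * eps = eps.
Proof. by rewrite /eps mulrDl !mulrDr e_mule e_mulf f_mul_e f_mulf addr0 add0r. Qed.

Lemma mul_e_sub_mul a x : (a * e - pi i a *: e) * x = pi i x *: (a * e - pi i a *: e).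
Proof. by rewrite mulrBl -scalerAl -mulrA e_mul -scalerAr scalerBr !scalerA mulrC. Qed.

Lemma glued_mul_eps a : A a -> a * eps = (a * e - pi i a *: e) + pi i a *: eps.
Proof. by move=> Aa; rewrite /eps mulrDr mul_f -Aa scalerDr addrA subrK. Qed.

Lemma glued_part_lin c x y : glued_part (c *: x + y) = c *: glued_part x + glued_part y.
Proof.
rewrite /glued_part /e_coord !(piDZ hpi) scalerBr scalerA addrACA -opprD -scalerDl.
by congr (_ - _ *: e); rewrite mulrBr opprD addrACA.
Qed.

Section Extension.
Variable Y : rep A.
Local Notation R := (ract Y).
Local Notation n := (rdim Y).

Definition dev b := eps * glued_part b - pi i (glued_part b) *: eps.

Lemma dev_radv b : dev b \in J.
Proof.
apply/(memv_radv hpi) => k; have Ag := glued_glued_part b.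
rewrite (piB hpi) (piM hpi) (piZ hpi) [pi i _ * _]mulrC -mulrBr.
have [->|nki] := eqVneq k i; first by rewrite subrr mulr0.
have [->|nkj] := eqVneq k j; first by rewrite Ag subrr mulr0.
by rewrite (piD hpi) pi_e pi_f (negbTE nki) (negbTE nkj) addr0 mul0r.
Qed.

Lemma glued_dev b : A (dev b). Proof. exact: radv_glued (dev_radv b). Qed.

Lemma dev_glued a : A a -> dev a = eps * a - pi i a *: eps.
Proof. by move=> Aa; rewrite /dev glued_part_id. Qed.

Lemma eps_mul_dev b : eps * dev b = dev b.
Proof. by rewrite /dev mulrBr mulrA eps_mul_eps -scalerAr eps_mul_eps. Qed.

Definition dev_mx b : 'M[F]_n := (R (dev b))^T.

Lemma dev_mx_is_linear : linear dev_mx.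
Proof.
move=> c x y; rewrite /dev_mx; have -> : dev (c *: x + y) = c *: dev x + dev y.
  rewrite /dev glued_part_lin (piDZ hpi) mulrDr -scalerAr scalerDl -scalerA.
  by rewrite opprD addrACA -scalerBr.
by rewrite (ract_lin Y _ (glued_dev x) (glued_dev y)) linearP.
Qed.
HB.instance Definition _ :=
  GRing.isLinear.Build F B 'M[F]_n _ dev_mx dev_mx_is_linear.

Definition dev_space : 'M[F]_n :=
  (\sum_(l < \dim (fullv : {vspace B})) <<dev_mx (vbasis fullv)`_l>>)%MS.

Lemma dev_mx_sub b : (dev_mx b <= dev_space)%MS.
Proof.
rewrite (coord_vbasis (memvf b)) linear_sum; apply: summx_sub => l _.
by rewrite linearZ scalemx_sub // (sumsmx_sup l) // genmxE.
Qed.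

(* [dev_proj] projects onto the sum of the column spaces of the [R (dev b)]. *)
Definition dev_proj : 'M[F]_n := (pinvmx dev_space *m dev_space)^T.

Lemma dev_proj_dev b : dev_proj *m R (dev b) = R (dev b).
Proof.
apply: trmx_inj; rewrite trmx_mul trmxK mulmxA.
exact: mulmxKpV (dev_mx_sub b).
Qed.

Lemma mul_dev_proj (C : 'M[F]_n) : (forall b, C *m R (dev b) = 0) -> C *m dev_proj = 0.
Proof.
move=> Cdev; apply: trmx_inj; rewrite trmx_mul trmxK trmx0 -mulmxA.
suff -> : dev_space *m C^T = 0 by rewrite mulmx0.
apply/sub_kermxP/sumsmx_subP => l _; rewrite genmxE; apply/sub_kermxP.
by rewrite -trmx_mul Cdev trmx0.
Qed.

Local Notation P := (R eps).
Local Notation Q := dev_proj.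

Lemma dev_proj_idem : Q *m Q = Q.
Proof.
apply/eqP; rewrite -subr_eq0 -{3}(mul1mx Q) -mulmxBl; apply/eqP/mul_dev_proj => b.
by rewrite mulmxBl dev_proj_dev mul1mx subrr.
Qed.

Lemma eps_mul_dev_proj : P *m Q = Q.
Proof.
apply/eqP; rewrite -subr_eq0 -{2}(mul1mx Q) -mulmxBl; apply/eqP/mul_dev_proj => b.
by rewrite mulmxBl -(ract_mul Y glued_eps (glued_dev b)) eps_mul_dev mul1mx subrr.
Qed.

Lemma mul_e_sub_dev_proj a : R (a * e - pi i a *: e) *m Q = 0.
Proof.
apply: mul_dev_proj => b; rewrite -(ract_mul Y (radv_glued (mul_e_sub a)) (glued_dev b)).
rewrite mul_e_sub_mul; have /(memv_radv hpi) -> := dev_radv b.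
by rewrite scale0r (ract0 Y glued0).
Qed.

Definition ext_e : 'M[F]_n := P - Q *m P.

Lemma eps_idem_mx : P *m P = P.
Proof. by rewrite -(ract_mul Y glued_eps glued_eps) eps_mul_eps. Qed.

Lemma ext_e_idem : ext_e *m ext_e = ext_e.
Proof.
rewrite /ext_e mulmxBl !mulmxBr eps_idem_mx mulmxA eps_mul_dev_proj -mulmxA eps_idem_mx.
by rewrite mulmxA -(mulmxA Q P Q) eps_mul_dev_proj dev_proj_idem subrr subr0.
Qed.

Lemma ext_e_mul a : A a -> ext_e *m R a = pi i a *: ext_e.
Proof.
move=> Aa; have Pa : P *m R a = R (dev a) + pi i a *: P.
  rewrite -(ract_mul Y glued_eps Aa) -(ractZ Y glued0 _ glued_eps).
  by rewrite -(ractD Y (glued_dev a) (gluedZ _ glued_eps)) dev_glued // subrK.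
rewrite /ext_e mulmxBl -mulmxA Pa mulmxDr dev_proj_dev -scalemxAr.
by rewrite opprD addrACA subrr add0r scalerBr.
Qed.

Lemma mul_ext_e a : A a -> R a *m ext_e = R (a * e - pi i a *: e) + pi i a *: ext_e.
Proof.
move=> Aa; have aP : R a *m P = R (a * e - pi i a *: e) + pi i a *: P.
  rewrite -(ract_mul Y Aa glued_eps) -(ractZ Y glued0 _ glued_eps).
  by rewrite -(ractD Y (radv_glued (mul_e_sub a)) (gluedZ _ glued_eps)) glued_mul_eps.
have aQ : R a *m Q = pi i a *: Q.
  by rewrite -eps_mul_dev_proj mulmxA aP mulmxDl mul_e_sub_dev_proj add0r -scalemxAl.
by rewrite /ext_e mulmxBr aP mulmxA aQ -scalemxAl scalerBr addrA.
Qed.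

Definition ext_act b : 'M[F]_n := R (glued_part b) + e_coord b *: ext_e.

Lemma ext_act_glued a c : A a -> ext_act (a + c *: e) = R a + c *: ext_e.
Proof. by move=> Aa; rewrite /ext_act glued_part_glued // e_coord_glued. Qed.

Lemma ext_act_lin c x y : True -> True -> ext_act (c *: x + y) = c *: ext_act x + ext_act y.
Proof.
move=> _ _; rewrite /ext_act glued_part_lin; move: ext_e => E.
rewrite (ract_lin Y _ (glued_glued_part x) (glued_glued_part y)) /e_coord !(piDZ hpi).
by rewrite scalerDr scalerA addrACA -scalerDl mulrBr opprD addrACA.
Qed.

Lemma mul_split a l a' l' : (a + l *: e) * (a' + l' *: e) =
  (a * a' + l' *: (a * e - pi i a *: e)) + (l' * pi i a + l * pi i a' + l * l') *: e.
Proof.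
rewrite mulrDl !mulrDr -!scalerAl -!scalerAr e_mul e_mule !scalerA.
by rewrite scalerBr scalerA !scalerDl -!addrA addKr.
Qed.

Lemma ext_act_mul x y : True -> True -> ext_act (x * y) = ext_act x *m ext_act y.
Proof.
move=> _ _; have Ax := glued_glued_part x; have Ay := glued_glued_part y.
have Aw := radv_glued (mul_e_sub (glued_part x)).
rewrite {1}(glued_partE x) {1}(glued_partE y) mul_split.
rewrite ext_act_glued; last exact: gluedD (gluedM Ax Ay) (gluedZ _ Aw).
rewrite (ractD Y (gluedM Ax Ay) (gluedZ _ Aw)) (ractZ Y glued0 _ Aw) (ract_mul Y Ax Ay).
rewrite /ext_act mulmxDl !mulmxDr -!scalemxAl -!scalemxAr mul_ext_e // ext_e_mul // ext_e_idem.
move: ext_e => E; by rewrite scalerDr !scalerA !scalerDl !addrA.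
Qed.

Lemma ext_act1 : ext_act 1 = 1%:M.
Proof. by rewrite /ext_act (glued_part_id glued1) /e_coord !(pi1 hpi) subrr scale0r addr0 (ract1 Y). Qed.

Definition ext_rep : rep S1 := @Rep F B S1 n ext_act ext_act_lin ext_act_mul ext_act1.

Lemma ext_act_res a : A a -> ext_act a = R a.
Proof. by move=> Aa; rewrite /ext_act glued_part_id // /e_coord Aa subrr scale0r addr0. Qed.

Lemma res_dense : exists (X : rep S1) (u : 'M[F]_(rdim Y, rdim (res A X)))
    (v : 'M[F]_(rdim (res A X), rdim Y)),
  [/\ is_hom u, is_hom v, qeq pi T2 (v *m u) 1%:M & qeq pi T2 (u *m v) 1%:M].
Proof.
exists ext_rep, 1%:M, 1%:M; rewrite mul1mx.
split; try by apply: (qeq_refl hpi (k := i)) => //; apply: is_hom1.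
all: by move=> a Aa; rewrite /= ext_act_res // mul1mx mulmx1.
Qed.
End Extension.

Lemma res_qcat_equiv : qcat_equiv pi S1 T1 A T2.
Proof.
exists (res A), (fun M N g => g).
split; first by move=> M N g; apply: res_is_hom.
split; first by move=> M N g h [ghom hhom /res_in_ideal]; split=> //; apply: res_is_hom.
split; first by move=> M; apply: (qeq_refl hpi (k := i)) => //; apply: is_hom1.
split.
  move=> M N P g h ghom hhom; apply: (qeq_refl hpi (k := i)) => //.
  exact/res_is_hom/is_hom_mul.
split; first exact: res_faithful.
split; first exact: res_full.
exact: res_dense.
Qed.
End Gluing.

Theorem theorem2p2 (F : closedFieldType) (B : falgType F) (m : nat)
    (pi : 'I_m -> B -> F) (i j : 'I_m) :
  top_chars pi -> i != j ->
  no_arrow_ends_at pi i -> no_arrow_starts_at pi j ->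
  qcat_equiv pi (fun _ => True) (fun k => k = i \/ k = j)
                (glued pi i j) (fun k => k = i).
Proof.
move=> hpi nij noi noj.
have [e [f [e_mul pi_e mul_f pi_f f_mul_e]]] := exists_gluing_idempotents hpi nij noi noj.
exact: (res_qcat_equiv hpi nij e_mul pi_e mul_f pi_f f_mul_e).
Qed.
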